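(* Let $A_1,\dots,A_N$ be trace class self-adjoint operators on a (separable) Hilbert space $\mathcal H$ with $\mathrm{Tr}\,A_i=0$ for each $1\le i\le N$. Suppose that for every orthogonal projection $P$ on $\mathcal H$ the set $C_P(A_1,\dots,A_N)$ is convex. Then there exists an orthonormal basis $\{g_k\}$ of $\mathcal H$ such that $\langle g_k,A_ig_k\rangle=0$ for all $i=1,\dots,N$ and all $k$.
   Context: For bounded self-adjoint operators $A_1,\dots,A_N$ on $\mathcal H$ and an orthogonal projection $P$ on $\mathcal H$, $C_P(A_1,\dots,A_N)=\{(\langle z,A_1z\rangle,\dots,\langle z,A_Nz\rangle): z\in P\mathcal H,\ \|z\|=1\}\subset\mathbb R^N$, the joint numerical range restricted to $P\mathcal H$. *)

From mathcomp Require Import all_boot all_order all_algebra.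
From mathcomp Require Import reals.
From mathcomp Require Import complex.
Set Implicit Arguments. Unset Strict Implicit. Unset Printing Implicit Defensive.
Import Order.TTheory GRing.Theory Num.Theory.
Local Open Scope ring_scope.

Section Hilbert.
Variable R : realType.
Local Notation C := R[i].
Variable V : lmodType C.
(* ip x y = <x, y>, conjugate-linear in x, linear in y (physics convention). *)
Variable ip : V -> V -> C.

Local Notation cRe := (@complex.Re R).
Local Notation cIm := (@complex.Im R).

Definition is_inner_product : Prop :=
  [/\ (forall x y z (a : C), ip x (a *: y + z) = a * ip x y + ip x z),
      (forall x y, ip y x = conjc (ip x y)),
      (forall x, 0 <= cRe (ip x x) /\ cIm (ip x x) = 0) &
      (forall x, ip x x = 0 -> x = 0)].

Definition cmod (z : C) : R := Num.sqrt (cRe z ^+ 2 + cIm z ^+ 2).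

Definition hnorm (x : V) : R := Num.sqrt (cRe (ip x x)).

Definition vconv (u : nat -> V) (l : V) : Prop :=
  forall e : R, 0 < e -> exists N : nat, forall n, (N <= n)%N -> hnorm (u n - l) < e.

Definition cconv (u : nat -> C) (l : C) : Prop :=
  forall e : R, 0 < e -> exists N : nat, forall n, (N <= n)%N -> cmod (u n - l) < e.

Definition complete_space : Prop :=
  forall u : nat -> V,
    (forall e : R, 0 < e -> exists N : nat, forall m n, (N <= m)%N -> (N <= n)%N ->
       hnorm (u m - u n) < e) ->
    exists l, vconv u l.

Definition separable_space : Prop :=
  exists d : nat -> V, forall x (e : R), 0 < e -> exists n, hnorm (x - d n) < e.

Definition bounded_linear (A : V -> V) : Prop :=
  (forall (a : C) x y, A (a *: x + y) = a *: A x + A y) /\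
  exists M : R, forall x, hnorm (A x) <= M * hnorm x.

Definition self_adjoint (A : V -> V) : Prop :=
  bounded_linear A /\ forall x y, ip (A x) y = ip x (A y).

Definition orth_projection (P : V -> V) : Prop :=
  self_adjoint P /\ forall x, P (P x) = P x.

(* A is trace class (nuclear) with trace t:
   A z = sum_n <y_n, z> x_n with sum_n ||x_n|| ||y_n|| < oo,
   and Tr A = sum_n <y_n, x_n>. *)
Definition trace_class_with_trace (A : V -> V) (t : C) : Prop :=
  exists x y : nat -> V,
    (exists M : R, forall n, \sum_(k < n) hnorm (x k) * hnorm (y k) <= M) /\
    (forall z, vconv (fun n => \sum_(k < n) ip (y k) z *: x k) (A z)) /\
    cconv (fun n => \sum_(k < n) ip (y k) (x k)) t.

Definition joint_num_range (N : nat) (A : 'I_N -> V -> V) (P : V -> V) (w : 'rV[R]_N) : Prop :=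
  exists z : V, P z = z /\ hnorm z = 1 /\ forall i, w 0 i = cRe (ip z (A i z)).

Definition convex_set (N : nat) (S : 'rV[R]_N -> Prop) : Prop :=
  forall u v (t : R), S u -> S v -> 0 <= t -> t <= 1 -> S (t *: u + (1 - t) *: v).

(* orthonormal basis = maximal orthonormal set *)
Definition orthonormal_basis (B : V -> Prop) : Prop :=
  [/\ (forall u, B u -> ip u u = 1),
      (forall u v, B u -> B v -> u <> v -> ip u v = 0) &
      (forall x, (forall u, B u -> ip u x = 0) -> x = 0)].

End Hilbert.

From mathcomp Require Import all_boot all_order all_algebra.
From mathcomp Require Import reals complex.
From mathcomp Require Import classical_sets boolp.
From mathcomp Require Import ring lra.
Import Order.TTheory GRing.Theory Num.Theory.
Local Open Scope ring_scope.
Set Implicit Arguments. Unset Strict Implicit. Unset Printing Implicit Defensive.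
Local Open Scope complex_scope.

(* By Zorn's lemma, take a maximal orthonormal family B of vectors g with
   <g, A_i g> = 0 for all i.  If B were not a basis, the set K of points
   (Re <z, A_i z>)_i, for unit vectors z orthogonal to B, would be nonempty;
   it is convex, since any two such z lie in the range of a finite-rank
   projection onto a subspace of B^perp.  A linear functional l that is
   nonnegative on K vanishes on K: after completing B + z to an orthonormal
   basis, l(z) is bounded by l applied to the partial traces of the A_i over
   large finite parts of the basis, and these tend to Tr A_i = 0 (Parseval and
   the nuclear representation of A_i).  By finite-dimensional separation 0
   lies in K, i.e. some unit vector orthogonal to B is isotropic for all A_i,
   contradicting maximality. *)

Lemma sup_between (R : realType) (S T : set R) :
  (exists s, S s) -> (exists t, T t) -> (forall s t, S s -> T t -> s <= t) ->
  exists c, (forall s, S s -> s <= c) /\ (forall t, T t -> c <= t).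
Proof.
move=> [s0 Ss0] [t0 Tt0] ST.
have hsS : has_sup S by split; [exists s0 | exists t0 => s Ss; apply: ST].
exists (sup S); split => [s Ss|t Tt]; first exact: sup_upper_bound.
by apply: ge_sup; [exists s0 | move=> s Ss; apply: ST].
Qed.

Definition inv_succ {R : numFieldType} (m : nat) : R := (m.+1%:R)^-1.

Lemma inv_succ_gt0 (R : numFieldType) m : 0 < inv_succ m :> R.
Proof. by rewrite invr_gt0 ltr0Sn. Qed.

Lemma exists_inv_succ_lt (R : archiRealFieldType) (e : R) : 0 < e ->
  exists N, forall m, (N <= m)%N -> inv_succ m < e.
Proof.
move=> e0; exists (Num.Def.archi_bound e^-1) => m Nm.
rewrite -(invrK e) ltf_pV2 ?posrE ?invr_gt0 ?ltr0n //.
have e_inv_ge0 : 0 <= e^-1 by rewrite invr_ge0 ltW.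
by apply: lt_le_trans (archi_boundP e_inv_ge0) _; rewrite ler_nat ltnW.
Qed.

Lemma ler_mul_divD1 (R : numFieldType) (a e : R) : 0 <= a -> 0 < e -> a * (e / (a + 1)) <= e.
Proof.
move=> a_ge0 e_gt0; rewrite mulrA ler_pdivrMr ?ltr_wpDl // mulrC.
by apply: ler_wpM2l; [exact: ltW | rewrite lerDl ler01].
Qed.

Lemma bounded_partial_sums_tail (R : realType) (a : nat -> R) (M : R) :
  (forall n, \sum_(0 <= k < n) a k <= M) ->
  forall e, 0 < e -> exists K, forall n, (K <= n)%N -> \sum_(K <= k < n) a k < e.
Proof.
move=> aM e e0; pose P : set R := fun r => exists n, r = \sum_(0 <= k < n) a k.
have P_sup : has_sup P by split; [exists (\sum_(0 <= k < 0) a k), 0%N | exists M => _ [n ->]].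
have [_ [K ->] PK] := sup_adherent e0 P_sup.
exists K => n Kn; have : \sum_(0 <= k < n) a k <= sup P by apply: sup_upper_bound; last exists n.
rewrite (big_cat_nat (leq0n K) Kn) /=.
lra.
Qed.

Section ConvexSeparation.
Variable R : realType.

Definition convex_pred n (K : ('I_n -> R) -> Prop) :=
  forall u v t, K u -> K v -> 0 <= t -> t <= 1 -> K (fun i => t * u i + (1 - t) * v i).

Definition dotf n (l u : 'I_n -> R) := \sum_i l i * u i.

Lemma dotf_comb n (l u v : 'I_n -> R) t :
  dotf l (fun i => t * u i + (1 - t) * v i) = t * dotf l u + (1 - t) * dotf l v.
Proof. by rewrite /dotf !mulr_sumr -big_split /=; apply: eq_bigr => i _; ring. Qed.

Lemma dotf0 n (l : 'I_n -> R) : dotf l (fun _ => 0) = 0.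
Proof. by rewrite /dotf big1 // => i _; rewrite mulr0. Qed.

Lemma dotf_delta n (j : 'I_n) c u : dotf (fun i => c * (i == j)%:R) u = c * u j.
Proof.
rewrite /dotf (bigD1 j) //= eqxx mulr1 big1 ?addr0 // => i /negbTE ->.
by rewrite mulr0 mul0r.
Qed.

Lemma dotf_split n (j : 'I_n.+1) (l u : 'I_n.+1 -> R) :
  dotf l u = l j * u j + dotf (l \o lift j) (u \o lift j).
Proof. by rewrite /dotf (bigD1_ord j). Qed.

Definition extend_at n (j : 'I_n.+1) (f : 'I_n -> R) (t : R) : 'I_n.+1 -> R :=
  fun i => if unlift j i is Some k then f k else t.

Lemma extend_at_id n (j : 'I_n.+1) f t : extend_at j f t j = t.
Proof. by rewrite /extend_at unlift_none. Qed.

Lemma extend_at_liftE n (j : 'I_n.+1) f t k : extend_at j f t (lift j k) = f k.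
Proof. by rewrite /extend_at liftK. Qed.

Lemma extend_at_lift n (j : 'I_n.+1) f t : extend_at j f t \o lift j = f.
Proof. by apply: funext => k /=; rewrite extend_at_liftE. Qed.

Lemma extend_at0 n (j : 'I_n.+1) : extend_at j (fun _ => 0) 0 = fun _ => 0.
Proof. by apply: funext => i; rewrite /extend_at; case: (unlift j i). Qed.

Lemma extend_atK n (j : 'I_n.+1) (u : 'I_n.+1 -> R) : extend_at j (u \o lift j) (u j) = u.
Proof. by apply: funext => i; rewrite /extend_at; case: unliftP => [k ->|->]. Qed.

Section Slice.
Variables (n : nat) (j : 'I_n.+1) (K : ('I_n.+1 -> R) -> Prop).
Hypothesis convexK : convex_pred K.

Definition slice (f : 'I_n -> R) := K (extend_at j f 0).

Lemma convex_slice : convex_pred slice.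
Proof.
move=> f g t Kf Kg t0 t1; rewrite /slice.
have -> : extend_at j (fun i => t * f i + (1 - t) * g i) 0 =
          (fun i => t * extend_at j f 0 i + (1 - t) * extend_at j g 0 i).
  by apply: funext => i; rewrite /extend_at; case: (unlift j i) => [k|] /=; ring.
exact: convexK.
Qed.

Lemma slice_mem u : K u -> u j = 0 -> slice (u \o lift j).
Proof. by move=> Ku uj0; rewrite /slice -uj0 extend_atK. Qed.

(* The point of the segment [u, v] on the hyperplane of coordinate j. *)
Lemma slice_cross u v : K u -> K v -> 0 < u j -> v j < 0 ->
  let t := - v j / (u j - v j) in slice (fun i => t * u (lift j i) + (1 - t) * v (lift j i)).
Proof.
move=> Ku Kv uj0 vj0 t.
have t0 : 0 <= t by rewrite divr_ge0 ?oppr_ge0 ?ltW // subr_gt0 (lt_trans vj0).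
have t1 : t <= 1 by rewrite ler_pdivrMr ?subr_gt0 ?(lt_trans vj0) // mul1r; lra.
apply: (slice_mem (convexK Ku Kv t0 t1)).
by rewrite /t; field; lra.
Qed.

Lemma slice_cross_ge0 (l : 'I_n -> R) :
  (forall f, slice f -> 0 <= dotf l f) ->
  forall u v, K u -> K v -> 0 < u j -> v j < 0 ->
  0 <= - v j * dotf l (u \o lift j) + u j * dotf l (v \o lift j).
Proof.
move=> l_ge0 u v Ku Kv uj0 vj0.
have := l_ge0 _ (slice_cross Ku Kv uj0 vj0); rewrite dotf_comb.
set t := - v j / (u j - v j) => h.
have -> : - v j * dotf l (u \o lift j) + u j * dotf l (v \o lift j) =
    (u j - v j) * (t * dotf l (u \o lift j) + (1 - t) * dotf l (v \o lift j)).
  by rewrite /t; field; lra.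
by rewrite mulr_ge0 // subr_ge0 ltW // (lt_trans vj0).
Qed.

(* The missing coefficient c is chosen between the slopes of K on the two
   sides of the hyperplane. *)
Lemma slice_functional_extend (l : 'I_n -> R) p q : K p -> K q -> 0 < p j -> q j < 0 ->
  (forall f, slice f -> 0 <= dotf l f) ->
  exists c, forall u, K u -> 0 <= dotf (extend_at j l c) u.
Proof.
move=> Kp Kq pj0 qj0 l_ge0; pose L u := dotf l (u \o lift j).
pose S s := exists2 u, K u /\ 0 < u j & s = - L u / u j.
pose T t := exists2 v, K v /\ v j < 0 & t = L v / - v j.
have ST s t : S s -> T t -> s <= t.
  move=> [u [Ku uj0] ->] [v [Kv vj0] ->].
  have := slice_cross_ge0 l_ge0 Ku Kv uj0 vj0; rewrite -/(L u) -/(L v).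
  rewrite ler_pdivrMr // mulrAC ler_pdivlMr ?oppr_gt0 //; nra.
have [c [c_ge c_le]] := sup_between
  (ex_intro _ _ (ex_intro2 _ _ p (conj Kp pj0) erefl) : exists s, S s)
  (ex_intro _ _ (ex_intro2 _ _ q (conj Kq qj0) erefl) : exists t, T t) ST.
exists c => u Ku; rewrite (dotf_split j) extend_at_id extend_at_lift -/(L u).
have [uj0|uj0|uj0] := ltgtP (u j) 0.
- have := c_le _ (ex_intro2 _ _ u (conj Ku uj0) erefl).
  rewrite ler_pdivlMr ?oppr_gt0 //; lra.
- have := c_ge _ (ex_intro2 _ _ u (conj Ku uj0) erefl).
  rewrite ler_pdivrMr //; lra.
- by rewrite uj0 mulr0 add0r; apply: l_ge0; apply: slice_mem.
Qed.

End Slice.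

(* Induction on the dimension: if K meets both sides of a coordinate
   hyperplane, a supporting functional of its slice extends to K. *)
Lemma convex_separate0 n (K : ('I_n -> R) -> Prop) :
  convex_pred K -> ~ K (fun _ => 0) -> (exists u, K u) ->
  exists l : 'I_n -> R, (exists i, l i != 0) /\ forall u, K u -> 0 <= dotf l u.
Proof.
elim: n K => [|n IH] K convexK K0 [w Kw].
  by case: K0; rewrite (_ : (fun _ => 0) = w) //; apply: funext => -[].
pose j : 'I_n.+1 := ord0.
have [Kj_ge0|/existsNP[q /not_implyP[Kq /negP]]] :=
    pselect (forall u, K u -> 0 <= u j).
  exists (fun i => 1 * (i == j)%:R); split; first by exists j; rewrite eqxx mulr1 oner_eq0.
  by move=> u Ku; rewrite dotf_delta mul1r Kj_ge0.
rewrite -ltNge => qj0.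
have [Kj_le0|/existsNP[p /not_implyP[Kp /negP]]] :=
    pselect (forall u, K u -> u j <= 0).
  exists (fun i => -1 * (i == j)%:R); split.
    by exists j; rewrite eqxx mulr1 oppr_eq0 oner_eq0.
  by move=> u Ku; rewrite dotf_delta mulN1r oppr_ge0 Kj_le0.
rewrite -ltNge => pj0.
have slice_ne0 : ~ slice j K (fun _ => 0) by rewrite /slice extend_at0.
have [l [[i li] l_ge0]] := IH _ (convex_slice (j := j) convexK) slice_ne0
  (ex_intro _ _ (slice_cross convexK Kp Kq pj0 qj0)).
have [c Kc_ge0] := slice_functional_extend convexK Kp Kq pj0 qj0 l_ge0.
by exists (extend_at j l c); split; first by exists (lift j i); rewrite extend_at_liftE.
Qed.

Lemma convex_mem0 n (K : ('I_n -> R) -> Prop) : convex_pred K -> (exists u, K u) ->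
  (forall l, (forall u, K u -> 0 <= dotf l u) -> forall u, K u -> dotf l u = 0) ->
  K (fun _ => 0).
Proof.
elim: n K => [|n IH] K convexK [w Kw] supporting0.
  by rewrite (_ : (fun _ => 0) = w) //; apply: funext => -[].
have [//|K0] := pselect (K (fun _ => 0)).
have [l [[j lj] l_ge0]] := convex_separate0 convexK K0 (ex_intro _ _ Kw).
pose K' f := exists2 u, K u & f = u \o lift j.
have convexK' : convex_pred K'.
  move=> _ _ t [u Ku ->] [v Kv ->] t0 t1.
  by exists (fun i => t * u i + (1 - t) * v i); [exact: convexK|].
have supporting0' l' : (forall f, K' f -> 0 <= dotf l' f) -> forall f, K' f -> dotf l' f = 0.
  have dotfE x : dotf (extend_at j l' 0) x = dotf l' (x \o lift j).
    by rewrite (dotf_split j) extend_at_id mul0r add0r extend_at_lift.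
  move=> l'_ge0 _ [v Kv ->]; rewrite -dotfE; apply: supporting0 Kv => x Kx.
  by rewrite dotfE; apply: l'_ge0; exists x.
have [v Kv /esym v0] := IH K' convexK' (ex_intro _ _ (ex_intro2 _ _ w Kw erefl)) supporting0'.
case: K0; suff <- : v = fun _ => 0 by [].
have /eqP := supporting0 _ l_ge0 _ Kv.
rewrite (dotf_split j) v0 dotf0 addr0 mulf_eq0 (negbTE lj) /= => /eqP vj0.
by rewrite -(extend_atK j v) v0 vj0 extend_at0.
Qed.

End ConvexSeparation.

Section ComplexModulus.
Variable R : realType.
Implicit Types a b : R[i].

Lemma normc_cmod a : `|a| = (cmod a)%:C.
Proof. by rewrite normc_def. Qed.

Lemma cmod_ge0 a : 0 <= cmod a.
Proof. exact: sqrtr_ge0. Qed.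

Lemma cmod0 : cmod (0 : R[i]) = 0.
Proof. by rewrite /cmod /= expr0n /= addr0 sqrtr0. Qed.

Lemma cmod_eq0 a : (cmod a == 0) = (a == 0).
Proof. by rewrite -(inj_eq (@complexI _)) -normc_cmod normr_eq0. Qed.

Lemma cmodD a b : cmod (a + b) <= cmod a + cmod b.
Proof. by rewrite -lecR rmorphD /= -!normc_cmod ler_normD. Qed.

Lemma cmod_sum I (r : seq I) (P : pred I) (F : I -> R[i]) :
  cmod (\sum_(i <- r | P i) F i) <= \sum_(i <- r | P i) cmod (F i).
Proof.
elim/big_rec2: _ => [|i y1 y2 _ IH]; first by rewrite cmod0.
by apply: le_trans (cmodD _ _) _; rewrite lerD2l.
Qed.

Lemma normRe_le_cmod a : `|complex.Re a| <= cmod a.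
Proof. by rewrite -lecR -normc_cmod normc_ge_Re. Qed.

Lemma conjc_mulC a : a^*%C * a = `|a| ^+ 2.
Proof. by rewrite sqr_normc mulrC. Qed.

Lemma real_conjc_Re0 a : a = a^*%C -> complex.Re a = 0 -> a = 0.
Proof.
case: a => x y /= [yE] ->; congr (_ +i* _).
by move: yE => /eqP; rewrite -subr_eq0 opprK -mulr2n mulrn_eq0 => /eqP.
Qed.

End ComplexModulus.

Lemma big_seq_delta (T : eqType) (M : nmodType) (s : seq T) (e : T) (G : T -> M) :
  uniq s -> e \in s -> (forall f, f \in s -> f != e -> G f = 0) ->
  \sum_(f <- s) G f = G e.
Proof.
move=> s_uniq es G0; rewrite (bigD1_seq e) //= big_seq_cond big1 ?addr0 //.
by move=> f /andP[fs fe]; apply: G0.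
Qed.

Section InnerProduct.
Variable R : realType.
Local Notation C := R[i].
Variable V : lmodType C.
Variable ip : V -> V -> C.
Hypothesis ipP : is_inner_product ip.
Implicit Types x y z : V.

Lemma ip_linr x y z (a : C) : ip x (a *: y + z) = a * ip x y + ip x z.
Proof. by case: ipP. Qed.

Lemma ip_conj x y : ip y x = (ip x y)^*%C.
Proof. by case: ipP. Qed.

Lemma ipxx_Re_Im x : 0 <= complex.Re (ip x x) /\ complex.Im (ip x x) = 0.
Proof. by case: ipP. Qed.

Lemma ip0r x : ip x 0 = 0.
Proof.
have := ip_linr x 0 0 1; rewrite scale1r addr0 mul1r => ip0E.
by apply: (addrI (ip x 0)); rewrite addr0 -ip0E.
Qed.

Lemma ipDr x y z : ip x (y + z) = ip x y + ip x z.
Proof. by have := ip_linr x y z 1; rewrite scale1r mul1r. Qed.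

Lemma ipZr x y a : ip x (a *: y) = a * ip x y.
Proof. by rewrite -[a *: y]addr0 ip_linr ip0r addr0. Qed.

Lemma ipNr x y : ip x (- y) = - ip x y.
Proof. by rewrite -scaleN1r ipZr mulN1r. Qed.

Lemma ipBr x y z : ip x (y - z) = ip x y - ip x z.
Proof. by rewrite ipDr ipNr. Qed.

Lemma ip0l x : ip 0 x = 0.
Proof. by rewrite ip_conj ip0r conjc0. Qed.

Lemma ipDl x y z : ip (x + y) z = ip x z + ip y z.
Proof. by rewrite ip_conj ipDr rmorphD /= -!ip_conj. Qed.

Lemma ipZl x y a : ip (a *: x) y = a^*%C * ip x y.
Proof. by rewrite ip_conj ipZr rmorphM /= -!ip_conj. Qed.

Lemma ipNl x y : ip (- x) y = - ip x y.
Proof. by rewrite ip_conj ipNr rmorphN /= -ip_conj. Qed.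

Lemma ipBl x y z : ip (x - y) z = ip x z - ip y z.
Proof. by rewrite ipDl ipNl. Qed.

Lemma ip_sumr I (r : seq I) (P : pred I) (F : I -> V) x :
  ip x (\sum_(i <- r | P i) F i) = \sum_(i <- r | P i) ip x (F i).
Proof. exact: (big_morph (ip x) (ipDr x) (ip0r x)). Qed.

Lemma ip_suml I (r : seq I) (P : pred I) (F : I -> V) x :
  ip (\sum_(i <- r | P i) F i) x = \sum_(i <- r | P i) ip (F i) x.
Proof. exact: (big_morph (ip^~ x) (fun a b => ipDl a b x) (ip0l x)). Qed.

Lemma ipxx_eq0 x : (ip x x == 0) = (x == 0).
Proof. by apply/eqP/eqP => [|->]; [case: ipP => _ _ _; apply | rewrite ip0r]. Qed.

Definition nsq x := complex.Re (ip x x).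

Lemma nsq_ge0 x : 0 <= nsq x.
Proof. by case: (ipxx_Re_Im x). Qed.

Lemma ipxx_nsq x : ip x x = (nsq x)%:C.
Proof. by rewrite /nsq; case: (ip x x) (ipxx_Re_Im x) => a b /= [_ ->]. Qed.

Lemma nsq_eq0 x : (nsq x == 0) = (x == 0).
Proof. by rewrite -ipxx_eq0 ipxx_nsq (inj_eq (@complexI _)). Qed.

Lemma hnorm_ge0 x : 0 <= hnorm ip x.
Proof. exact: sqrtr_ge0. Qed.

Lemma hnorm_sq x : hnorm ip x ^+ 2 = nsq x.
Proof. by rewrite /hnorm sqr_sqrtr // nsq_ge0. Qed.

Lemma hnorm_eq0 x : (hnorm ip x == 0) = (x == 0).
Proof. by rewrite /hnorm sqrtr_eq0 -nsq_eq0 eq_le nsq_ge0 andbT. Qed.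

Lemma hnorm1 x : (hnorm ip x = 1) <-> (ip x x = 1).
Proof.
rewrite ipxx_nsq; split => [hx1|[nx1]]; first by rewrite -hnorm_sq hx1 expr1n.
by rewrite /hnorm -/(nsq x) nx1 sqrtr1.
Qed.

Lemma hnormB x y : hnorm ip (x - y) = hnorm ip (y - x).
Proof. by rewrite /hnorm -opprB ipNl ipNr opprK. Qed.

Lemma cauchy_schwarz x y : cmod (ip x y) <= hnorm ip x * hnorm ip y.
Proof.
have [->|y0] := eqVneq y 0.
  by rewrite ip0r cmod0 mulr_ge0 ?hnorm_ge0.
rewrite -(ler_pXn2r (_ : (0 < 2)%N)) ?nnegrE ?cmod_ge0 ?mulr_ge0 ?hnorm_ge0 //.
rewrite exprMn !hnorm_sq -lecR rmorphXn /= -normc_cmod rmorphM /= -!ipxx_nsq.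
have yy_gt0 : 0 < ip y y.
  by rewrite lt_def ipxx_eq0 y0 ipxx_nsq lecR nsq_ge0.
pose c := ip y x / ip y y.
have : 0 <= ip (x - c *: y) (x - c *: y) by rewrite ipxx_nsq lecR nsq_ge0.
have cE : c^*%C = ip x y / ip y y.
  by rewrite /c rmorphM /= conjc_inv -!ip_conj.
rewrite !ipBl !ipBr !ipZl !ipZr cE /c (ip_conj x y).
set a := ip x y; set b := ip y y.
have -> : ip x x - a^*%C / b * a - (a / b * a^*%C - a / b * (a^*%C / b * b)) =
          ip x x - `|a| ^+ 2 / b.
  by rewrite -conjc_mulC; field; rewrite gt_eqF.
by rewrite subr_ge0 ler_pdivrMr // mulrC.
Qed.


Definition orthonormal_seq (s : seq V) :=
  uniq s /\ forall u v, u \in s -> v \in s -> ip u v = (u == v)%:R.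

Definition proj (s : seq V) x := \sum_(e <- s) ip e x *: e.

Definition bessel_sum (s : seq V) x := \sum_(e <- s) cmod (ip e x) ^+ 2.

Lemma projD s x y : proj s (x + y) = proj s x + proj s y.
Proof. by rewrite /proj -big_split; apply: eq_bigr => e _; rewrite ipDr scalerDl. Qed.

Lemma projZ s a x : proj s (a *: x) = a *: proj s x.
Proof. by rewrite /proj scaler_sumr; apply: eq_bigr => e _; rewrite ipZr scalerA. Qed.

Lemma proj_orth s x y : (forall e, e \in s -> ip y e = 0) -> ip y (proj s x) = 0.
Proof.
move=> ys0; rewrite /proj ip_sumr big_seq big1 // => e es.
by rewrite ipZr ys0 // mulr0.
Qed.

Lemma bessel_sum_ge0 s x : 0 <= bessel_sum s x.
Proof. by apply: sumr_ge0 => e _; rewrite exprn_ge0 // cmod_ge0. Qed.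

Section OrthonormalSeq.
Variable s : seq V.
Hypothesis sP : orthonormal_seq s.

Lemma ip_proj_mem e x : e \in s -> ip e (proj s x) = ip e x.
Proof.
case: sP => s_uniq s_ip es; rewrite /proj ip_sumr.
rewrite (@big_seq_delta _ _ s e (fun f => ip e (ip f x *: f))) //.
  by rewrite ipZr (s_ip e e) // eqxx mulr1.
by move=> f fs fe; rewrite ipZr (s_ip e f) // eq_sym (negbTE fe) mulr0.
Qed.

Lemma proj_mem e : e \in s -> proj s e = e.
Proof.
case: sP => s_uniq s_ip es; rewrite /proj (@big_seq_delta _ _ s e (fun f => ip f e *: f)) //.
  by rewrite (s_ip e e) // eqxx scale1r.
by move=> f fs fe; rewrite (s_ip f e) // (negbTE fe) scale0r.
Qed.

Lemma projK x : proj s (proj s x) = proj s x.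
Proof. by apply: eq_big_seq => e es; rewrite ip_proj_mem. Qed.

Lemma ip_projl x y : ip (proj s x) y = ip x (proj s y).
Proof.
rewrite /proj ip_suml ip_sumr; apply: eq_bigr => e _.
by rewrite ipZl ipZr -ip_conj mulrC.
Qed.

Lemma ip_proj x : ip x (proj s x) = (bessel_sum s x)%:C.
Proof.
rewrite /proj /bessel_sum ip_sumr rmorph_sum; apply: eq_bigr => e _.
by rewrite ipZr (ip_conj x e) rmorphXn /= -normc_cmod -conjc_mulC conjcK mulrC.
Qed.

Lemma nsq_proj x : nsq (proj s x) = bessel_sum s x.
Proof. by rewrite /nsq ip_projl projK ip_proj. Qed.

Lemma nsq_subproj x : nsq (x - proj s x) = nsq x - bessel_sum s x.
Proof.
rewrite /nsq ipBl !ipBr (ip_projl x (proj s x)) projK (ip_projl x x) ip_proj.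
rewrite !raddfB /=; lra.
Qed.

Lemma bessel_inequality x : bessel_sum s x <= nsq x.
Proof. by have := nsq_ge0 (x - proj s x); rewrite nsq_subproj subr_ge0. Qed.

Lemma hnorm_proj x : hnorm ip (proj s x) <= hnorm ip x.
Proof. by rewrite /hnorm ler_wsqrtr // -/(nsq _) nsq_proj bessel_inequality. Qed.

Lemma hnorm_subproj x : hnorm ip (x - proj s x) <= hnorm ip x.
Proof. by rewrite /hnorm ler_wsqrtr // -!/(nsq _) nsq_subproj gerBl bessel_sum_ge0. Qed.

Lemma orth_projection_proj : orth_projection ip (proj s).
Proof.
split; [split; [split|] | exact: projK]; last exact: ip_projl.
  by move=> a x y; rewrite projD projZ.
by exists 1 => x; rewrite mul1r hnorm_proj.
Qed.

End OrthonormalSeq.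

Lemma unit_normalize y : y != 0 -> ip (((hnorm ip y)^-1)%:C *: y) (((hnorm ip y)^-1)%:C *: y) = 1.
Proof.
move=> y0; have hy0 : hnorm ip y != 0 by rewrite hnorm_eq0.
rewrite ipZl ipZr ipxx_nsq -hnorm_sq conjc_real -!rmorphM /=.
by congr (_%:C); field.
Qed.

(* Gram-Schmidt on [z1; z2]. *)
Lemma orthonormal_seq_span2 (B : V -> Prop) z1 z2 :
  ip z1 z1 = 1 -> ip z2 z2 = 1 ->
  (forall g, B g -> ip g z1 = 0) -> (forall g, B g -> ip g z2 = 0) ->
  exists s, [/\ orthonormal_seq s, forall e, e \in s -> forall g, B g -> ip g e = 0,
     proj s z1 = z1 & proj s z2 = z2].
Proof.
move=> z1_unit z2_unit z1B z2B.
pose c := ip z1 z2; pose w := z2 - c *: z1.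
have z2E : z2 = c *: z1 + w by rewrite /w addrC subrK.
have wz1 : ip z1 w = 0 by rewrite /w ipBr ipZr z1_unit mulr1 subrr.
have wB g : B g -> ip g w = 0 by move=> Bg; rewrite /w ipBr ipZr z1B // z2B // mulr0 subrr.
have [w0|w_neq0] := eqVneq w 0.
  have s_on : orthonormal_seq [:: z1].
    by split => // u v; rewrite !inE => /eqP -> /eqP ->; rewrite eqxx z1_unit.
  exists [:: z1]; split => //; first by move=> e; rewrite inE => /eqP ->.
    by rewrite proj_mem // mem_head.
  by rewrite z2E w0 addr0 projZ proj_mem // mem_head.
pose h := hnorm ip w; pose e2 := (h^-1)%:C *: w.
have h0 : h != 0 by rewrite hnorm_eq0.
have e2_unit : ip e2 e2 = 1 by apply: unit_normalize.
have e2z1 : ip z1 e2 = 0 by rewrite ipZr wz1 mulr0.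
have z1e2 : ip e2 z1 = 0 by rewrite ip_conj e2z1 conjc0.
have z1_neq_e2 : z1 != e2.
  by apply/eqP => z1E; move: z1_unit; rewrite {2}z1E e2z1 => /eqP; rewrite eq_sym oner_eq0.
have s_on : orthonormal_seq [:: z1; e2].
  split; first by rewrite /= inE z1_neq_e2.
  move=> u v; rewrite !inE => /orP[] /eqP -> /orP[] /eqP ->;
    by rewrite ?eqxx ?z1_unit ?e2_unit ?e2z1 ?z1e2 ?(negbTE z1_neq_e2) // eq_sym (negbTE z1_neq_e2).
have wE : w = h%:C *: e2 by rewrite /e2 scalerA -rmorphM mulfV // scale1r.
have e2B g : B g -> ip g e2 = 0 by move=> Bg; rewrite ipZr wB // mulr0.
clearbody e2.
exists [:: z1; e2]; split => //.
- by move=> e; rewrite !inE => /orP[] /eqP -> g Bg; [apply: z1B | apply: e2B].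
- by rewrite proj_mem // mem_head.
- have [z1s e2s] : z1 \in [:: z1; e2] /\ e2 \in [:: z1; e2] by rewrite !inE !eqxx orbT.
  by rewrite z2E wE projD !projZ (proj_mem s_on z1s) (proj_mem s_on e2s).
Qed.

Definition orth_numrange N (A : 'I_N -> V -> V) (B : V -> Prop) (f : 'I_N -> R) :=
  exists z, [/\ forall g, B g -> ip g z = 0, ip z z = 1 &
    forall i, f i = complex.Re (ip z (A i z))].

(* Two unit vectors orthogonal to B span the range of a finite-rank projection
   onto a subspace of B^perp, where the convexity hypothesis applies. *)
Lemma convex_orth_numrange N (A : 'I_N -> V -> V) (B : V -> Prop) :
  (forall P, orth_projection ip P -> convex_set (joint_num_range ip A P)) ->
  convex_pred (orth_numrange A B).
Proof.
move=> numrange_convex f1 f2 t [z1 [z1B z1_unit f1E]] [z2 [z2B z2_unit f2E]] t0 t1.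
have [s [s_on sB z1s z2s]] := orthonormal_seq_span2 z1_unit z2_unit z1B z2B.
have range_row z f : proj s z = z -> ip z z = 1 -> (forall i, f i = complex.Re (ip z (A i z))) ->
    joint_num_range ip A (proj s) (\row_i f i).
  by move=> zs z_unit fE; exists z; split => //; split; [exact/hnorm1 | move=> i; rewrite mxE fE].
have [z [zs [z_unit fE]]] := numrange_convex _ (orth_projection_proj s_on) _ _ _
  (range_row _ _ z1s z1_unit f1E) (range_row _ _ z2s z2_unit f2E) t0 t1.
exists z; split.
- by move=> g Bg; rewrite -zs; apply: proj_orth => e es; apply: sB.
- exact/hnorm1.
- by move=> i; rewrite -fE !mxE.
Qed.

Lemma vconv_uniform (f : nat -> V -> V) (g : V -> V) (r : seq V) :
  (forall e, e \in r -> vconv ip (f^~ e) (g e)) ->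
  forall eta, 0 < eta -> exists N, forall n, (N <= n)%N -> forall e, e \in r ->
    hnorm ip (f n e - g e) < eta.
Proof.
move=> fg eta eta0; elim: r fg => [|a r IH] fg; first by exists 0%N => n _ e; rewrite in_nil.
have [N1 N1r] := IH (fun e er => fg e (@mem_behead _ (a :: r) e er)).
have [N2 N2a] := fg a (mem_head a r) _ eta0.
exists (maxn N1 N2) => n; rewrite geq_max => /andP[N1n N2n] e.
by rewrite inE => /orP[/eqP ->|/N1r]; [apply: N2a | apply].
Qed.

(* U e is the n-th partial sum of the nuclear representation of A0. *)
Lemma partial_trace_split (s : seq V) (xs ys : nat -> V) n (A0 : V -> V) t :
  let U e := \sum_(k < n) ip (ys k) e *: xs k in
  \sum_(e <- s) ip e (A0 e) - t =
    \sum_(e <- s) ip e (A0 e - U e) + \sum_(k < n) ip (ys k) (proj s (xs k) - xs k) +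
    (\sum_(k < n) ip (ys k) (xs k) - t).
Proof.
move=> U; have UE : \sum_(e <- s) ip e (U e) = \sum_(k < n) ip (ys k) (proj s (xs k)).
  under eq_bigr do rewrite ip_sumr.
  rewrite exchange_big /=; apply: eq_bigr => k _.
  by rewrite /proj ip_sumr; apply: eq_bigr => e _; rewrite !ipZr mulrC.
under [in RHS]eq_bigr do rewrite ipBr.
under [X in _ = _ + X + _]eq_bigr do rewrite ipBr.
by rewrite !sumrB UE; ring.
Qed.

Lemma cmod_sum_ip_le (s : seq V) (v : V -> V) (eta : R) :
  (forall e, e \in s -> ip e e = 1) -> (forall e, e \in s -> hnorm ip (v e) <= eta) ->
  cmod (\sum_(e <- s) ip e (v e)) <= eta *+ size s.
Proof.
move=> s_unit v_le; apply: le_trans (cmod_sum _ _ _) _.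
rewrite -[size s]count_predT -iter_addr_0 -big_const_seq big_seq [X in _ <= X]big_seq.
apply: ler_sum => e es; apply: le_trans (cauchy_schwarz _ _) _.
by rewrite (proj2 (hnorm1 _) (s_unit e es)) mul1r v_le.
Qed.

(* Split the partial sum at K: below K use [hnorm (x - proj x) <= dl],
   above K use [hnorm (x - proj x) <= hnorm x]. *)
Lemma cmod_sum_ip_subproj_le (s : seq V) (xs ys : nat -> V) K n dl :
  orthonormal_seq s -> (K <= n)%N ->
  (forall k, (k < K)%N -> hnorm ip (xs k - proj s (xs k)) <= dl) ->
  cmod (\sum_(k < n) ip (ys k) (proj s (xs k) - xs k)) <=
    (\sum_(0 <= k < K) hnorm ip (ys k)) * dl + \sum_(K <= k < n) hnorm ip (xs k) * hnorm ip (ys k).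
Proof.
move=> s_on Kn xs_approx; apply: le_trans (cmod_sum _ _ _) _.
pose b k := hnorm ip (ys k) * hnorm ip (xs k - proj s (xs k)).
apply: (@le_trans _ _ (\sum_(k < n) b k)).
  by apply: ler_sum => k _; rewrite /b hnormB; apply: cauchy_schwarz.
rewrite -(big_mkord xpredT b) (big_cat_nat (leq0n K) Kn) /= mulr_suml.
apply: lerD; rewrite !big_nat; apply: ler_sum => k /andP[_ kn].
  by rewrite /b ler_wpM2l ?hnorm_ge0 ?xs_approx.
by rewrite /b mulrC ler_wpM2r ?hnorm_ge0 ?hnorm_subproj.
Qed.

Section OrthonormalFamily.
Variable S : V -> Prop.
Hypothesis S_basis : orthonormal_basis ip S.

Let S_unit u : S u -> ip u u = 1.
Proof. by case: S_basis => + _ _; apply. Qed.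

Let S_orth u v : S u -> S v -> u <> v -> ip u v = 0.
Proof. by case: S_basis => _ + _; apply. Qed.

Let S_total x : (forall u, S u -> ip u x = 0) -> x = 0.
Proof. by case: S_basis => _ _; apply. Qed.

Definition fin_subfamily (s : seq V) := uniq s /\ forall e, e \in s -> S e.

Lemma fin_subfamily_on s : fin_subfamily s -> orthonormal_seq s.
Proof.
case=> s_uniq sS; split => // u v us vs.
have [->|uv] := eqVneq u v; first by rewrite S_unit //; apply: sS.
by rewrite S_orth //; [apply: sS | apply: sS | apply/eqP].
Qed.

Lemma fin_subfamily_filter s p : fin_subfamily s -> fin_subfamily (filter p s).
Proof.
case=> s_uniq sS; split; first exact: filter_uniq.
by move=> e; rewrite mem_filter => /andP[_ /sS].
Qed.

Lemma fin_subfamily_undup_cat s1 s2 :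
  fin_subfamily s1 -> fin_subfamily s2 -> fin_subfamily (undup (s1 ++ s2)).
Proof.
move=> [_ s1S] [_ s2S]; split => [|e]; first exact: undup_uniq.
by rewrite mem_undup mem_cat => /orP[/s1S|/s2S].
Qed.

(* Q holds eventually along the net of finite subfamilies of S, directed by
   inclusion. *)
Definition eventually (Q : seq V -> Prop) :=
  exists2 s0, fin_subfamily s0 & forall s, fin_subfamily s -> {subset s0 <= s} -> Q s.

Lemma eventually_mono (Q1 Q2 : seq V -> Prop) :
  (forall s, fin_subfamily s -> Q1 s -> Q2 s) -> eventually Q1 -> eventually Q2.
Proof. by move=> Q12 [s0 s0S Q1s0]; exists s0 => // s sS sub; apply/Q12/Q1s0. Qed.

Lemma eventually_and (Q1 Q2 : seq V -> Prop) :
  eventually Q1 -> eventually Q2 -> eventually (fun s => Q1 s /\ Q2 s).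
Proof.
move=> [s1 s1S Q1s1] [s2 s2S Q2s2]; exists (undup (s1 ++ s2)).
  exact: fin_subfamily_undup_cat.
move=> s sS sub; split; [apply: Q1s1 | apply: Q2s2] => // e es; apply: sub;
  by rewrite mem_undup mem_cat es ?orbT.
Qed.

Lemma eventually_all (T : eqType) (r : seq T) (Q : T -> seq V -> Prop) :
  (forall a, a \in r -> eventually (Q a)) -> eventually (fun s => forall a, a \in r -> Q a s).
Proof.
elim: r => [|a r IH] Qr; first by exists [::] => // s _ _ b; rewrite in_nil.
have := eventually_and (IH (fun b br => Qr b (@mem_behead _ (a :: r) b br))) (Qr a (mem_head a r)).
by apply: eventually_mono => s _ [Qrs Qas] b; rewrite inE => /orP[/eqP ->|/Qrs].
Qed.

Lemma eventually_mem e : S e -> eventually (fun s => e \in s).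
Proof.
move=> Se; exists [:: e]; last by move=> s _; apply; rewrite mem_head.
by split => // f; rewrite inE => /eqP ->.
Qed.

Lemma big_fin_subfamily_split (M : nmodType) s s' (F : V -> M) :
  fin_subfamily s -> fin_subfamily s' -> {subset s <= s'} ->
  \sum_(e <- s') F e = \sum_(e <- s) F e + \sum_(e <- [seq f <- s' | f \notin s]) F e.
Proof.
move=> [s_uniq _] [s'_uniq _] sub; rewrite (bigID (mem s)) /= big_filter; congr (_ + _).
rewrite -big_filter; apply/perm_big/uniq_perm; rewrite ?filter_uniq // => e.
by rewrite mem_filter; case: (boolP (e \in s)) => es //=; rewrite sub.
Qed.

Lemma bessel_sum_mono s s' x : fin_subfamily s -> fin_subfamily s' -> {subset s <= s'} ->
  bessel_sum s x <= bessel_sum s' x.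
Proof.
move=> sS s'S sub; rewrite /bessel_sum (big_fin_subfamily_split _ sS s'S sub) lerDl.
exact: bessel_sum_ge0.
Qed.

Lemma nsq_proj_sub s s' x : fin_subfamily s -> fin_subfamily s' -> {subset s <= s'} ->
  nsq (proj s' x - proj s x) = bessel_sum s' x - bessel_sum s x.
Proof.
move=> sS s'S sub; rewrite /proj /bessel_sum !(big_fin_subfamily_split _ sS s'S sub).
rewrite addrAC subrr add0r addrAC subrr add0r -/(proj _ x) nsq_proj //.
exact/fin_subfamily_on/fin_subfamily_filter.
Qed.

Hypothesis V_complete : complete_space ip.

Section Parseval.
Variable x : V.

Let bessel_sums : set R := fun r => exists2 s, fin_subfamily s & r = bessel_sum s x.

Let bessel_sup : R := sup bessel_sums.

Let has_sup_bessel_sums : has_sup bessel_sums.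
Proof.
split; first by exists 0, [::]; rewrite /bessel_sum ?big_nil.
by exists (nsq x) => _ [s sS ->]; apply/bessel_inequality/fin_subfamily_on.
Qed.

Let bessel_sum_le_sup s : fin_subfamily s -> bessel_sum s x <= bessel_sup.
Proof. by move=> sS; apply: sup_upper_bound; last exists s. Qed.

Lemma bessel_sup_seq : exists t : nat -> seq V,
  [/\ forall m, fin_subfamily (t m), forall m n, (m <= n)%N -> {subset t m <= t n}
    & forall m, bessel_sup - inv_succ m < bessel_sum (t m) x].
Proof.
have /choice[s sP] m : exists s, fin_subfamily s /\ bessel_sup - inv_succ m < bessel_sum s x.
  have [_ [s sS ->] ?] := sup_adherent (inv_succ_gt0 R m) has_sup_bessel_sums.
  by exists s.
pose t m := undup (flatten (map s (iota 0 m.+1))).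
have tE m e : (e \in t m) = has (fun k => e \in s k) (iota 0 m.+1).
  by rewrite mem_undup; elim: (iota 0 m.+1) => //= k r IH; rewrite mem_cat IH.
have t_fin m : fin_subfamily (t m).
  split=> [|e]; first exact: undup_uniq.
  by rewrite tE => /hasP[k _ ek]; case: (sP k) => -[_ skS] _; apply: skS.
have s_t m : {subset s m <= t m}.
  by move=> e em; rewrite tE; apply/hasP; exists m; rewrite ?mem_iota ?add0n ?ltnS ?leqnn.
exists t; split => // [m n mn e|m].
  rewrite !tE => /hasP[k]; rewrite !mem_iota !add0n => km ek.
  by apply/hasP; exists k; rewrite // mem_iota add0n (leq_trans km).
by case: (sP m) => sS /lt_le_trans; apply; apply: bessel_sum_mono.
Qed.

Section ProjSeq.
Variable t : nat -> seq V.
Hypothesis t_fin : forall m, fin_subfamily (t m).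
Hypothesis t_nested : forall m n, (m <= n)%N -> {subset t m <= t n}.
Hypothesis t_approx : forall m, bessel_sup - inv_succ m < bessel_sum (t m) x.

Let u m := proj (t m) x.

Lemma nsq_proj_seq_sub m n : (m <= n)%N -> nsq (u n - u m) < inv_succ m.
Proof.
move=> mn; rewrite nsq_proj_sub //; last exact: t_nested.
have := t_approx m; have := bessel_sum_le_sup (t_fin n); lra.
Qed.

Lemma proj_seq_cauchy (e : R) : 0 < e ->
  exists N, forall m n, (N <= m)%N -> (N <= n)%N -> hnorm ip (u m - u n) < e.
Proof.
move=> e0; have [N Ne] := exists_inv_succ_lt (exprn_gt0 2 e0).
have small m n : (N <= m)%N -> (m <= n)%N -> hnorm ip (u n - u m) < e.
  move=> Nm mn; rewrite -(ltr_pXn2r (_ : (0 < 2)%N)) ?nnegrE ?hnorm_ge0 ?ltW //.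
  by rewrite hnorm_sq (lt_trans (nsq_proj_seq_sub mn)) ?Ne.
exists N => m n Nm Nn; have [mn|/ltnW nm] := leqP m n; last exact: small.
by rewrite hnormB; apply: small.
Qed.

(* A vector of S outside t m contributes at most sup - bessel_sum (t m) x. *)
Lemma ip_subproj_seq_small e m : S e -> cmod (ip e (x - u m)) ^+ 2 < inv_succ m.
Proof.
move=> Se; have [etm|etm] := boolP (e \in t m).
  by rewrite ipBr ip_proj_mem ?subrr ?cmod0 ?expr0n ?inv_succ_gt0 //; apply: fin_subfamily_on.
have et_fin : fin_subfamily (e :: t m).
  case: (t_fin m) => t_uniq tS; split; first by rewrite /= etm.
  by move=> f; rewrite inE => /orP[/eqP ->|/tS].
have -> : ip e (x - u m) = ip e x.
  rewrite ipBr proj_orth ?subr0 // => f ft; apply: S_orth => //.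
    by case: (t_fin m) => _; apply.
  by move=> ef; rewrite ef ft in etm.
have := bessel_sum_le_sup et_fin; rewrite /bessel_sum big_cons -/(bessel_sum _ x).
have := t_approx m; lra.
Qed.

Lemma proj_seq_lim y : vconv ip u y -> y = x.
Proof.
move=> uy; apply/eqP; rewrite -subr_eq0 -opprB oppr_eq0; apply/eqP/S_total => e Se.
apply/eqP; rewrite -cmod_eq0 eq_le cmod_ge0 andbT; apply/ler_addgt0Pr => d d0.
rewrite add0r; have d2 : 0 < d / 2 by rewrite divr_gt0.
have [N1 N1u] := uy _ d2; have [N2 N2inv] := exists_inv_succ_lt (exprn_gt0 2 d2).
pose m := maxn N1 N2.
have small1 : cmod (ip e (x - u m)) < d / 2.
  rewrite -(ltr_pXn2r (_ : (0 < 2)%N)) ?nnegrE ?cmod_ge0 ?ltW //.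
  by rewrite (lt_trans (ip_subproj_seq_small m Se)) // N2inv ?leq_maxr.
have small2 : cmod (ip e (u m - y)) < d / 2.
  apply: le_lt_trans (cauchy_schwarz _ _) _.
  by rewrite (proj2 (hnorm1 _) (S_unit Se)) mul1r N1u ?leq_maxl.
have -> : x - y = (x - u m) + (u m - y) by rewrite addrA subrK.
rewrite ipDr (splitr d); apply/ltW/(le_lt_trans (cmodD _ _)).
exact: ltrD.
Qed.

End ProjSeq.

Lemma nsq_le_bessel_sup : nsq x <= bessel_sup.
Proof.
have [t [t_fin t_nested t_approx]] := bessel_sup_seq.
have [y uy] := V_complete (proj_seq_cauchy t_fin t_nested t_approx).
have yx := proj_seq_lim t_fin t_approx uy; rewrite {}yx in uy.
apply/ler_addgt0Pr => d d0; have sqrt_d_gt0 : 0 < Num.sqrt d by rewrite sqrtr_gt0.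
have [N Nu] := uy _ sqrt_d_gt0.
have := Nu N (leqnn N); rewrite hnormB /hnorm ltr_sqrt // -/(nsq _).
rewrite nsq_subproj; last exact: fin_subfamily_on.
have := bessel_sum_le_sup (t_fin N); lra.
Qed.

Lemma parseval eps : 0 < eps -> eventually (fun s => nsq (x - proj s x) < eps).
Proof.
move=> eps0; have [_ [s0 s0S ->] s0_approx] := sup_adherent eps0 has_sup_bessel_sums.
exists s0 => // s sS sub; rewrite nsq_subproj; last exact: fin_subfamily_on.
have := bessel_sum_mono x s0S sS sub; have := nsq_le_bessel_sup; rewrite /bessel_sup; lra.
Qed.

End Parseval.


Lemma trace_approx (A0 : V -> V) t : trace_class_with_trace ip A0 t ->
  forall eps, 0 < eps -> eventually (fun s => cmod (\sum_(e <- s) ip e (A0 e) - t) < eps).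
Proof.
move=> [xs [ys [[M xyM] [A0E tE]]]] eps eps0.
pose e4 := eps / 4; have e4_gt0 : 0 < e4 by rewrite divr_gt0.
have xyM' n : \sum_(0 <= k < n) hnorm ip (xs k) * hnorm ip (ys k) <= M by rewrite big_mkord.
have [K tail] := bounded_partial_sums_tail xyM' e4_gt0.
pose Y := \sum_(0 <= k < K) hnorm ip (ys k).
have Y_ge0 : 0 <= Y by apply: sumr_ge0 => k _; apply: hnorm_ge0.
pose dl := e4 / (Y + 1); have dl_gt0 : 0 < dl by rewrite divr_gt0 // ltr_wpDl.
have := eventually_all (r := iota 0 K) (fun k _ => parseval (xs k) (exprn_gt0 2 dl_gt0)).
apply: eventually_mono => s sS xs_approx; have s_on := fin_subfamily_on sS.
pose U n e := \sum_(k < n) ip (ys k) e *: xs k.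
pose eta := e4 / ((size s)%:R + 1); have eta_gt0 : 0 < eta by rewrite divr_gt0 // ltr_wpDl.
have [N1 N1U] := vconv_uniform (f := U) (g := A0) (r := s) (fun e _ => A0E e) eta_gt0.
have [N2 N2t] := tE _ e4_gt0.
pose n := maxn K (maxn N1 N2).
have [Kn N1n N2n] : [/\ (K <= n)%N, (N1 <= n)%N & (N2 <= n)%N].
  by rewrite !leq_max !leqnn !orbT.
rewrite (partial_trace_split s xs ys n).
have T1_le : cmod (\sum_(e <- s) ip e (A0 e - U n e)) <= e4.
  apply: le_trans (cmod_sum_ip_le (eta := eta) _ _) _.
  - by move=> e es; apply/S_unit/(proj2 sS).
  - by move=> e es; rewrite hnormB; apply/ltW/N1U.
  by rewrite -mulr_natl ler_mul_divD1 ?ler0n.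
have T2_lt : cmod (\sum_(k < n) ip (ys k) (proj s (xs k) - xs k)) < e4 + e4.
  apply: le_lt_trans (cmod_sum_ip_subproj_le (dl := dl) ys s_on Kn _) _.
    move=> k kK; have := xs_approx k; rewrite mem_iota add0n => /(_ kK) xk_approx.
    apply/ltW; rewrite -(ltr_pXn2r (_ : (0 < 2)%N)) ?nnegrE ?hnorm_ge0 ?ltW //.
    by rewrite hnorm_sq.
  exact: ler_ltD (ler_mul_divD1 Y_ge0 e4_gt0) (tail _ Kn).
have T3_lt := N2t n N2n.
rewrite (_ : eps = e4 + (e4 + e4) + e4); last by rewrite /e4; field.
apply: le_lt_trans (cmodD _ _) _.
apply: ltr_leD (ltW T3_lt); apply: le_lt_trans (cmodD _ _) _.
exact: ler_ltD.
Qed.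

End OrthonormalFamily.

Definition orthonormal_family (X : V -> Prop) :=
  (forall u, X u -> ip u u = 1) /\ (forall u v, X u -> X v -> u <> v -> ip u v = 0).

Lemma exists_maximal_orthonormal (Q B0 : V -> Prop) : orthonormal_family B0 ->
  exists A : V -> Prop, [/\ orthonormal_family (fun u => A u \/ B0 u), forall u, A u -> Q u &
    forall z, Q z -> ip z z = 1 -> ~ forall u, A u \/ B0 u -> ip u z = 0].
Proof.
move=> [B0_unit B0_orth].
pose P (X : set V) := orthonormal_family (fun u => X u \/ B0 u) /\ forall u, X u -> Q u.
have [|A [[[A_unit A_orth] AQ] A_max]] := @Zorn_bigcup V P.
  move=> F FP F_total; split; last by move=> u [X FX Xu]; case: (FP X FX) => _; apply.
  split=> [u [[X FX Xu]|B0u]|u v [[X FX Xu]|B0u] [[Y FY Yv]|B0v] uv]; last exact: B0_orth.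
  - by case: (FP X FX) => -[+ _] _; apply; left.
  - exact: B0_unit.
  - have [XY|YX] := F_total X Y FX FY.
      by case: (FP Y FY) => -[_ +] _; apply => //; left => //; apply: XY.
    by case: (FP X FX) => -[_ +] _; apply => //; left => //; apply: YX.
  - by case: (FP X FX) => -[_ +] _; apply => //; [left | right].
  - by case: (FP Y FY) => -[_ +] _; apply => //; [right | left].
exists A; split => // z Qz z_unit zA.
have Az : ~ A z by move=> Az; move: (zA z (or_introl Az)); rewrite z_unit => /eqP; rewrite oner_eq0.
apply: (A_max (fun u => A u \/ u = z)); first by split => [u Au|/(_ z (or_intror erefl))]; [left|].
split=> [|u [Au|->]]; [split|by apply: AQ|by []].
  by move=> u [[Au|->]|B0u]; [apply: A_unit; left | | apply: A_unit; right].
move=> u v [[Au|->]|B0u] [[Av|->]|B0v] uv.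
- by apply: A_orth => //; left.
- by apply: zA; left.
- by apply: A_orth => //; [left|right].
- by rewrite ip_conj zA ?conjc0 //; left.
- by [].
- by rewrite ip_conj zA ?conjc0 //; right.
- by apply: A_orth => //; [right|left].
- by apply: zA; right.
- exact: B0_orth.
Qed.

Lemma exists_orthonormal_basis_ext (B0 : V -> Prop) : orthonormal_family B0 ->
  exists2 S, orthonormal_basis ip S & forall u, B0 u -> S u.
Proof.
move=> B0_on; have [A [[S_unit S_orth] _ A_max]] := exists_maximal_orthonormal (fun=> True) B0_on.
exists (fun u => A u \/ B0 u); last by move=> u; right.
split=> // y yS; have [//|y_neq0] := eqVneq y 0.
by case: (A_max _ I (unit_normalize y_neq0)) => u Su; rewrite ipZr yS // mulr0.
Qed.

Section SupportingFunctional.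
Variables (N : nat) (A : 'I_N -> V -> V) (B : V -> Prop).
Hypothesis V_complete : complete_space ip.
Hypothesis A_trace0 : forall i, trace_class_with_trace ip (A i) 0.
Hypothesis B_on : orthonormal_family B.
Hypothesis B_isotropic : forall g, B g -> forall i, ip g (A i g) = 0.

Let numvec e : 'I_N -> R := fun i => complex.Re (ip e (A i e)).

Lemma dotf_le_partial_trace (l : 'I_N -> R) (S : V -> Prop) s z :
  (forall f, orth_numrange A B f -> 0 <= dotf l f) ->
  orthonormal_basis ip S -> (forall g, B g -> S g) ->
  fin_subfamily S s -> z \in s -> ~ B z ->
  dotf l (numvec z) <= \sum_i l i * complex.Re (\sum_(e <- s) ip e (A i e)).
Proof.
move=> l_ge0 [S_unit S_orth _] BS [s_uniq sS] zs.
have term_ge0 e : e \in s -> 0 <= dotf l (numvec e).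
  move=> es; have [Be|nBe] := pselect (B e).
    by rewrite /dotf big1 // => i _; rewrite /numvec B_isotropic // mulr0.
  apply: l_ge0; exists e; split; [move=> g Bg | exact/S_unit/sS | by []].
  by apply: S_orth; [exact: BS | exact: sS | move=> ge; apply: nBe; rewrite -ge].
have -> : \sum_i l i * complex.Re (\sum_(e <- s) ip e (A i e)) = \sum_(e <- s) dotf l (numvec e).
  rewrite /dotf exchange_big /=; apply: eq_bigr => i _.
  by rewrite raddf_sum /= mulr_sumr.
move=> _; rewrite (bigD1_seq z) //= lerDl big_seq_cond sumr_ge0 // => e /andP[es _].
exact: term_ge0.
Qed.

(* Complete B + z to an orthonormal basis S: on large finite parts s of S the
   partial traces of the A i are small, while dotf l is nonnegative on every
   term of the partial trace and equals dotf l f on the term of z. *)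
Lemma orth_numrange_supporting0 (l : 'I_N -> R) :
  (forall f, orth_numrange A B f -> 0 <= dotf l f) ->
  forall f, orth_numrange A B f -> dotf l f = 0.
Proof.
move=> l_ge0 f [z [zB z_unit fE]].
have Bz : ~ B z by move=> /zB; rewrite z_unit => /eqP; rewrite oner_eq0.
have Bz_on : orthonormal_family (fun u => B u \/ u = z).
  case: B_on => B_unit B_orth; split=> [u [/B_unit|->]//|u v [Bu|->] [Bv|->] //].
  - exact: B_orth.
  - by move=> _; apply: zB.
  - by move=> _; rewrite ip_conj zB ?conjc0.
have [S S_basis BzS] := exists_orthonormal_basis_ext Bz_on.
apply/eqP; rewrite eq_le l_ge0 ?andbT; last by exists z.
apply/ler_addgt0Pr => d d0; rewrite add0r.
pose Cl := \sum_i `|l i|; have Cl_ge0 : 0 <= Cl by apply: sumr_ge0 => i _.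
pose eps := d / (Cl + 1); have eps_gt0 : 0 < eps by rewrite divr_gt0 // ltr_wpDl.
have [s s_fin /(_ s s_fin (fun _ => id))[trace_small zs]] := eventually_and
  (eventually_all (r := enum 'I_N)
    (fun i _ => trace_approx S_basis V_complete (A_trace0 i) eps_gt0))
  (eventually_mem (BzS z (or_intror erefl))).
have -> : f = numvec z by apply: funext.
have BS g : B g -> S g by move=> Bg; apply: BzS; left.
apply: le_trans (dotf_le_partial_trace l_ge0 S_basis BS s_fin zs Bz) _.
apply: (@le_trans _ _ (Cl * eps)).
  rewrite /Cl mulr_suml; apply: ler_sum => i _; apply: le_trans (ler_norm _) _.
  rewrite normrM ler_wpM2l //; apply: le_trans (normRe_le_cmod _) _.
  by have := trace_small i (mem_enum _ i); rewrite subr0 => /ltW.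
exact: ler_mul_divD1.
Qed.

End SupportingFunctional.

Lemma self_adjoint_ip_real (A : V -> V) z : self_adjoint ip A -> ip z (A z) = (ip z (A z))^*%C.
Proof. by case=> _ A_sa; rewrite -ip_conj A_sa. Qed.

End InnerProduct.

Theorem lemma3p6 (R : realType) (V : lmodType R[i]) (ip : V -> V -> R[i])
  (N : nat) (A : 'I_N -> V -> V) :
  is_inner_product ip -> complete_space ip -> separable_space ip ->
  (forall i, self_adjoint ip (A i)) ->
  (forall i, trace_class_with_trace ip (A i) 0) ->
  (forall P, orth_projection ip P -> convex_set (joint_num_range ip A P)) ->
  exists B : V -> Prop, orthonormal_basis ip B /\
    (forall g, B g -> forall i, ip g (A i g) = 0).
Proof.
move=> ipP V_complete _ A_sa A_trace0 numrange_convex.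
pose isotropic g := forall i, ip g (A i g) = 0.
have empty_on : orthonormal_family ip (fun=> False) by split.
have [B [[B_unit B_orth] B_iso B_max]] := exists_maximal_orthonormal ipP isotropic empty_on.
have B_on : orthonormal_family ip B.
  by split=> [u Bu|u v Bu Bv]; [apply: B_unit | apply: B_orth]; left.
exists B; split => //; split; [exact: B_on.1 | exact: B_on.2 | move=> x xB].
have [//|x_neq0] := eqVneq x 0; exfalso.
have numrange_ne : exists f, orth_numrange ip A B f.
  pose e := ((hnorm ip x)^-1)%:C *: x.
  exists (fun i => complex.Re (ip e (A i e))), e; split => //; last exact: unit_normalize.
  by move=> g Bg; rewrite (ipZr ipP) xB // mulr0.
have [z [zB z_unit Re0]] := convex_mem0 (convex_orth_numrange ipP (B := B) numrange_convex)
  numrange_ne (orth_numrange_supporting0 ipP V_complete A_trace0 B_on B_iso).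
have z_iso : isotropic z.
  by move=> i; apply: (real_conjc_Re0 (self_adjoint_ip_real ipP z (A_sa i))); rewrite -Re0.
by apply: (B_max z z_iso z_unit) => u [/zB|[]].
Qed.
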